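(* There is an absolute constant $C$ such that the following holds. Let $\mathcal S$ be a family of subsets of $[n]$, let $w_S\ge0$ for $S\in\mathcal S$, and suppose that $q(z)=\mathrm{sgn}(-\theta+\sum_{S\in\mathcal S}w_Sz_S)$ (for $z\in\{0,1\}^{\mathcal S}$) is a $(\theta,m)$-LTF with $\theta\ge2m>0$. Let $f\colon\{0,1\}^n\to\{0,1\}$ be $f(x)=\mathrm{sgn}\big(-\theta+\sum_{S\in\mathcal S}w_S\cdot\bigvee_{i\in S}x_i\big)$. Then $R^{lin}_{1/3}(f)\le C\left(\frac{\theta}{m}\right)^4\log^2\frac{\theta}{m}$.
   Context: $\mathrm{sgn}(y)=0$ for $y<0$ and $\mathrm{sgn}(y)=1$ for $y\ge0$. A $(\theta,m)$-LTF is a function $\mathrm{sgn}(-\theta+\sum_{j} w_jz_j)$ on a Boolean cube with real weights $w_j\ge0$ and real threshold $\theta$, whose margin $m>0$ satisfies $m\le\min_{z}|-\theta+\sum_jw_jz_j|$. For $S\subseteq[n]$, $\chi_S(x)=\sum_{i\in S}x_i\pmod2$. Exact randomized $\mathbb F_2$-sketch complexity: for $f\colon\mathbb F_2^n\to\mathbb R$ and $\delta\in[0,1]$, $R^{lin}_\delta(f)$ is the smallest integer $k$ such that there exists a probability distribution over $k$-tuples of subsets $\mathbf S_1,\dots,\mathbf S_k\subseteq[n]$ and a function $g\colon\mathbb F_2^k\to\mathbb R$ with $\Pr_{\mathbf S_1,\dots,\mathbf S_k}[g(\chi_{\mathbf S_1}(x),\dots,\chi_{\mathbf S_k}(x))=f(x)]\ge1-\delta$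 for every $x\in\mathbb F_2^n$. *)

From mathcomp Require Import all_boot.
From Stdlib Require Import Reals ClassicalEpsilon.

Set Implicit Arguments.
Unset Strict Implicit.
Unset Printing Implicit Defensive.

Open Scope R_scope.

Definition sgn (y : R) : R := if Rle_dec 0 y then 1 else 0.

Definition b2R (b : bool) : R := if b then 1 else 0.

Definition sumR (l : seq R) : R := foldr Rplus 0 l.

Definition cube (n : nat) := {ffun 'I_n -> bool}.

Definition chi (n : nat) (A : {set 'I_n}) (x : cube n) : bool :=
  odd #|[set i in A | x i]|.

Definition ltf_form (n : nat) (F : {set {set 'I_n}}) (w : {set 'I_n} -> R)
  (theta : R) (z : {set 'I_n} -> bool) : R :=
  - theta + sumR [seq w A * b2R (z A) | A <- enum F].

(* q(z) = sgn(-theta + sum w_S z_S) is a (theta,m)-LTF: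
   nonnegative weights, margin m > 0, m <= min_z |-theta + sum w_S z_S|.
   (z ranges over all functions; only its values on F matter.) *)
Definition is_theta_m_LTF (n : nat) (F : {set {set 'I_n}}) (w : {set 'I_n} -> R)
  (theta m : R) : Prop :=
  (forall A, A \in F -> 0 <= w A) /\ 0 < m /\
  (forall z : {set 'I_n} -> bool, m <= Rabs (ltf_form F w theta z)).

Definition f_or (n : nat) (F : {set {set 'I_n}}) (w : {set 'I_n} -> R)
  (theta : R) (x : cube n) : R :=
  sgn (ltf_form F w theta (fun A => [exists i in A, x i])).

Definition sketch (n k : nat) (Ss : k.-tuple {set 'I_n}) (x : cube n) : k.-tuple bool :=
  map_tuple (fun A => chi A x) Ss.

(* A probability distribution over k-tuples of subsets of [n] is given by a
   finite list of (probability, tuple) pairs (every distribution on this finite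
   set is finitely supported). *)
Definition succ_prob (n k : nat) (D : seq (R * k.-tuple {set 'I_n}))
  (g : k.-tuple bool -> R) (f : cube n -> R) (x : cube n) : R :=
  sumR [seq (if Req_EM_T (g (sketch p.2 x)) (f x) then p.1 else 0) | p <- D].

Definition is_distr (T : Type) (D : seq (R * T)) : Prop :=
  (forall p, List.In p D -> 0 <= fst p) /\ sumR [seq p.1 | p <- D] = 1.

Definition sketchable (n : nat) (delta : R) (f : cube n -> R) (k : nat) : Prop :=
  exists (D : seq (R * k.-tuple {set 'I_n})) (g : k.-tuple bool -> R),
    is_distr D /\ forall x : cube n, 1 - delta <= succ_prob D g f x.

Definition sketchable_b (n : nat) (delta : R) (f : cube n -> R) (k : nat) : bool :=
  if excluded_middle_informative (sketchable delta f k) then true else false.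

Lemma sketchable_ex_b (n : nat) (delta : R) (f : cube n -> R) :
  (exists k, sketchable delta f k) -> exists k, sketchable_b delta f k.
Proof.
move=> [k Hk]; exists k; rewrite /sketchable_b.
by case: excluded_middle_informative.
Qed.

(* R^{lin}_delta(f): the smallest k such that a sketch of size k exists
   (set to 0 in the degenerate case where none exists, which never happens
   for delta in [0,1]). *)
Definition Rlin (n : nat) (delta : R) (f : cube n -> R) : nat :=
  match excluded_middle_informative (exists k, sketchable delta f k) with
  | left H => ex_minn (sketchable_ex_b H)
  | right _ => 0%nat
  end.

(* Randomized F_2-sketch for f(x) = sgn(-theta + sum_S w_S OR_{i in S} x_i)
   when q is a (theta, m)-LTF with theta >= 2m; put t = theta / m.

   Pick an integer N with t <= N <= t + 1 and discretize each weight to a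
   level floor(w_S / delta) with delta = m / N, capped at K = N (N + 1).  A
   random hash h sends the sets of F to B = 6 N^2 values; bucket (h S, level S)
   collects the sets with that hash and level.  For each bucket j and each of
   r = O(log N) repetitions, the sketch stores the parity of x on a uniformly
   random subset of the union of the sets in bucket j; a bucket is detected
   when one of its parities is odd.  The decoder adds the levels of the
   detected buckets and compares delta times this estimate with theta - m.
   - If f(x) = 0, a detected bucket contains a hit set, so the estimate is
     below the true weight and the answer is always 0 (decode_light).
   - If f(x) = 1, some family A0 of at most N hit sets already has weight
     >= theta + m (small_heavy_family); when h is injective on A0 and all its
     buckets are detected the answer is 1 (decode_heavy), and by a union bound
     this good event has probability >= 2/3 (card_not_good).
   The sketch has B (K + 1) r = O(t^4 log^2 t) coordinates, which bounds
   R^lin_{1/3}(f). *)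

From Stdlib Require Import Reals Lra Lia ZArith ClassicalEpsilon.
From mathcomp Require Import all_boot zify.

Set Implicit Arguments.
Unset Strict Implicit.
Unset Printing Implicit Defensive.

Open Scope R_scope.

Lemma sumR_split_one (T : eqType) (l : seq T) (w : T -> R) (z : T -> bool) X :
  uniq l -> X \in l ->
  sumR [seq w a * b2R (z a) | a <- l] =
  w X * b2R (z X) + sumR [seq w a * b2R (z a && (a != X)) | a <- l].
Proof.
elim: l => [|a l IH] //= /andP[anl ul]; rewrite inE => /orP[/eqP eXa|Xl].
  subst a; rewrite eqxx andbF /= Rmult_0_r Rplus_0_l; congr (_ + _).
  elim: l anl {IH ul} => [|b l IH] //=; rewrite inE negb_or => /andP[bX Xl].
  by rewrite eq_sym bX andbT IH.
have aX : a != X by apply: contraNneq anl => ->.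
by rewrite IH // aX andbT /=; lra.
Qed.

Lemma sumR_lower (T : eqType) (l : seq T) (w : T -> R) (z : T -> bool)
    (c : T -> nat) d :
  (forall X, X \in l -> z X -> INR (c X) * d <= w X) ->
  INR (\sum_(X <- l | z X) c X) * d <= sumR [seq w X * b2R (z X) | X <- l].
Proof.
elim: l => [|b l IH] H /=; first by rewrite big_nil /=; lra.
have {}IH := IH (fun X Xl => H X (@mem_behead _ (b :: l) X Xl)).
rewrite big_cons; case zb: (z b) => /=; last by lra.
by have := H b (mem_head _ _) zb; rewrite plus_INR; lra.
Qed.

Lemma sumR_upper (T : eqType) (l : seq T) (w : T -> R) (z : T -> bool)
    (c : T -> nat) d :
  (forall X, X \in l -> z X -> w X <= (INR (c X) + 1) * d) ->
  sumR [seq w X * b2R (z X) | X <- l] <=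
  INR (\sum_(X <- l | z X) c X) * d + INR (count z l) * d.
Proof.
elim: l => [|b l IH] H /=; first by rewrite big_nil /=; lra.
have {}IH := IH (fun X Xl => H X (@mem_behead _ (b :: l) X Xl)).
rewrite big_cons plus_INR; case zb: (z b) => /=; last by lra.
by have := H b (mem_head _ _) zb; rewrite plus_INR; lra.
Qed.

Lemma sumR_const (T : Type) (l : seq T) (c : R) :
  sumR [seq c | _ <- l] = INR (size l) * c.
Proof.
elim: l => [|b l IH]; first by rewrite /=; lra.
have -> : size (b :: l) = (size l).+1 by [].
by rewrite [sumR _]/= IH S_INR; ring.
Qed.

Lemma sumR_hits (T : Type) (l : seq T) (g : T -> R) (b c : R) (p : pred T) :
  0 <= c -> (forall x, p x -> g x = b) ->
  INR (count p l) * c <= sumR [seq (if Req_EM_T (g x) b then c else 0) | x <- l].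
Proof.
move=> c0 H; elim: l => [|y l IH] /=; first lra.
rewrite plus_INR Rmult_plus_distr_r.
case py: (p y) => /=.
  by rewrite (H y py); destruct (Req_EM_T b b) => /=; lra.
by destruct (Req_EM_T (g y) b) => /=; lra.
Qed.

Close Scope R_scope.

Lemma card_ffun_pred (aT rT : finType) (P : aT -> pred rT) :
  #|[set f : {ffun aT -> rT} | [forall x, P x (f x)]]| = \prod_(x : aT) #|P x|.
Proof.
rewrite -(@eq_card _ (family P)); last by move=> f; rewrite inE.
by rewrite card_family foldrE big_map /= big_enum.
Qed.

Lemma card_fibres (T U : finType) (P : pred T) (k : T -> U) :
  #|[set x | P x]| = \sum_(u : U) #|[set x | P x & k x == u]|.
Proof.
rewrite -sum1_card (partition_big k xpredT) //.
by apply: eq_bigr => u _; rewrite -sum1_card; apply: eq_bigl => x; rewrite !inE.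
Qed.

Section TwoPoints.
Variables (aT rT : finType) (a1 a2 : aT).
Hypothesis a12 : a1 != a2.

Let c := \prod_(x : aT) (if (x == a1) || (x == a2) then 1 else #|rT|).

Lemma card_ffun_fix2 (u v : rT) :
  #|[set f : {ffun aT -> rT} | (f a1 == u) && (f a2 == v)]| = c.
Proof.
pose P x : pred rT :=
  if x == a1 then pred1 u else if x == a2 then pred1 v else predT.
have -> : [set f : {ffun aT -> rT} | (f a1 == u) && (f a2 == v)] =
          [set f : {ffun aT -> rT} | [forall x, P x (f x)]].
  apply/setP => f; rewrite !inE; apply/andP/forallP => [[/eqP e1 /eqP e2] x|H].
    by rewrite /P; case: (x =P a1) => [->|_]; [|case: (x =P a2) => [->|]] => /=;
      rewrite ?e1 ?e2.
  by have := H a1; have := H a2; rewrite /P eqxx eq_sym (negbTE a12) eqxx.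
rewrite card_ffun_pred; apply: eq_bigr => x _; rewrite /P.
case: (x == a1); first by rewrite card1.
by case: (x == a2); rewrite ?card1 //; apply: eq_card.
Qed.

Lemma card_ffun_collision :
  #|rT| * #|[set f : {ffun aT -> rT} | f a1 == f a2]| = #|{ffun aT -> rT}|.
Proof.
have -> : #|[set f : {ffun aT -> rT} | f a1 == f a2]| = #|rT| * c.
  rewrite (card_fibres _ (fun f : {ffun aT -> rT} => f a1)) -sum_nat_const.
  apply: eq_bigr => u _; rewrite -(card_ffun_fix2 u u); apply: eq_card => f.
  by rewrite !inE; case: (f a1 =P u) => [->|_]; rewrite ?andbF // andbT eq_sym.
have -> : #|{ffun aT -> rT}| = #|[set f : {ffun aT -> rT} | true]|.
  by apply: eq_card => f; rewrite inE.
rewrite (card_fibres _ (fun f : {ffun aT -> rT} => f a1)) -sum_nat_const.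
apply: eq_bigr => u _.
rewrite (card_fibres _ (fun f : {ffun aT -> rT} => f a2)) -sum_nat_const.
by apply: eq_bigr => v _; rewrite -(card_ffun_fix2 u v); apply: eq_card => f.
Qed.

End TwoPoints.

Definition toggle (T : finType) (i : T) (A : {set T}) : {set T} :=
  [set j | (j \in A) != (j == i)].

Lemma toggleK (T : finType) (i : T) : involutive (toggle i).
Proof.
by move=> A; apply/setP => j; rewrite !inE; case: (j \in A); case: (j == i).
Qed.

Lemma odd_card_toggle (T : finType) (i : T) (A : {set T}) :
  odd #|toggle i A| = ~~ odd #|A|.
Proof.
case iA: (i \in A).
  have -> : toggle i A = A :\ i.
    apply/setP => j; rewrite !inE.
    by case: (j =P i) => [->|_]; rewrite ?iA //=; case: (j \in A).
  by rewrite [in RHS](cardsD1 i A) iA /= negbK.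
have -> : toggle i A = i |: A.
  apply/setP => j; rewrite !inE.
  by case: (j =P i) => [->|_]; rewrite ?iA //=; case: (j \in A).
by rewrite cardsU1 iA.
Qed.

(* If x i holds for some i in E, then exactly half of all subsets R of [n]
   have even parity chi_{R cap E}(x): toggling i in R flips the parity. *)
Lemma card_even_parity n (E : {set 'I_n}) (x : cube n) i : i \in E -> x i ->
  2 * #|[set R : {set 'I_n} | ~~ chi (R :&: E) x]| = #|{set 'I_n}|.
Proof.
move=> iE xi.
have chi_toggle R : chi (toggle i R :&: E) x = ~~ chi (R :&: E) x.
  rewrite /chi -(odd_card_toggle i); congr (odd _); apply: eq_card => j.
  rewrite !inE; case: (j =P i) => [->|_]; rewrite ?iE ?xi /=.
    by case: (i \in R).
  by case: (j \in R); case: (j \in E); case: (x j).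
set Ev := [set R : {set 'I_n} | ~~ chi (R :&: E) x].
have img : Ev = toggle i @: ~: Ev.
  apply/setP => R; rewrite !inE; apply/idP/imsetP => [evR | [R' oddR' ->]].
    by exists (toggle i R); rewrite ?toggleK // !inE chi_toggle evR.
  by move: oddR'; rewrite !inE negbK chi_toggle negbK.
have card_Ev : #|Ev| = #|~: Ev|.
  by rewrite {1}img card_imset //; apply: can_inj (toggleK i).
by rewrite -(cardsC Ev) -card_Ev mul2n addnn.
Qed.

Lemma card_all_even_parities n (U : finType) (r : nat) (j0 : U)
    (E : {set 'I_n}) (x : cube n) i : i \in E -> x i ->
  2 ^ r * #|[set R : {ffun U * 'I_r -> {set 'I_n}} |
              ~~ [exists l : 'I_r, chi (R (j0, l) :&: E) x]]| =
  #|{ffun U * 'I_r -> {set 'I_n}}|.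
Proof.
move=> iE xi.
set a := #|[set S : {set 'I_n} | ~~ chi (S :&: E) x]|.
set M := #|{set 'I_n}|.
have haM : 2 * a = M by apply: card_even_parity iE xi.
pose P (jl : U * 'I_r) : pred {set 'I_n} :=
  if jl.1 == j0 then [pred S | ~~ chi (S :&: E) x] else predT.
have -> : [set R : {ffun U * 'I_r -> {set 'I_n}} |
              ~~ [exists l : 'I_r, chi (R (j0, l) :&: E) x]] =
          [set R : {ffun U * 'I_r -> {set 'I_n}} | [forall jl, P jl (R jl)]].
  apply/setP => R; rewrite !inE negb_exists; apply/forallP/forallP.
    by move=> H [j l]; rewrite /P /=; case: eqP => [->|] //=; apply: H.
  by move=> H l; have := H (j0, l); rewrite /P /= eqxx.
rewrite card_ffun_pred card_ffun card_prod card_ord.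
rewrite (eq_bigr (fun jl : U * 'I_r => if jl.1 == j0 then a else M)); last first.
  move=> [j l] _; rewrite /P /=; case: eqP => _; apply: eq_card => //.
  by move=> S; rewrite inE.
rewrite -(pair_bigA _ (fun (j : U) (l : 'I_r) => if j == j0 then a else M)) /=.
rewrite (bigD1 j0) //= eqxx prod_nat_const card_ord mulnA -expnMn haM.
rewrite (eq_bigr (fun _ => M ^ r)); last first.
  by move=> j /negbTE ->; rewrite prod_nat_const card_ord.
by rewrite -/M [#|U| * r]mulnC expnM -prod_nat_const [RHS](bigD1 j0).
Qed.

Lemma card_bigcup_le (T I : finType) (P : pred I) (S : I -> {set T}) :
  #|\bigcup_(i | P i) S i| <= \sum_(i | P i) #|S i|.
Proof.
elim/big_rec2: _ => [|i y1 y2 _ IH]; first by rewrite cards0.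
by apply: leq_trans (leq_card_setU _ _) _; rewrite leq_add2l.
Qed.

Lemma card_pairs (T1 T2 : finType) (P : T1 -> T2 -> bool) :
  #|[set o : T1 * T2 | P o.1 o.2]| = \sum_(a : T1) #|[set b | P a b]|.
Proof.
rewrite (card_fibres _ (fun o : T1 * T2 => o.1)); apply: eq_bigr => a _.
have -> : [set o : T1 * T2 | P o.1 o.2 & o.1 == a] = pair a @: [set b | P a b].
  apply/setP => [[a' b]]; rewrite !inE /=; apply/andP/imsetP.
    by move=> [Pab /eqP ea]; subst a'; exists b; rewrite ?inE.
  by move=> [b' ]; rewrite inE => Pab [-> ->]; rewrite Pab eqxx.
by rewrite card_imset // => b1 b2 [].
Qed.

Lemma count_enum_card (T : finType) (p : pred T) :
  count p (enum T) = #|[set x | p x]|.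
Proof.
by rewrite -sum1_count big_enum_cond -sum1_card; apply: eq_bigl => y; rewrite inE.
Qed.

Lemma sum_enum_subset (T : finType) (A B : {set T}) (c : T -> nat) :
  A \subset B -> \sum_(X <- enum B | X \in A) c X = \sum_(X in A) c X.
Proof.
move=> AB; rewrite big_enum_cond; apply: eq_bigl => X.
by case XA: (X \in A); rewrite ?andbT ?andbF // (subsetP AB).
Qed.

Lemma count_enum_subset (T : finType) (A B : {set T}) :
  A \subset B -> count (mem A) (enum B) = #|A|.
Proof. by move=> AB; rewrite -sum1_count sum_enum_subset // sum1_card. Qed.

Open Scope R_scope.

Lemma floor_nat_spec y : 0 <= y ->
  INR (Z.to_nat (Int_part y)) <= y < INR (Z.to_nat (Int_part y)) + 1.
Proof.
move=> y0; have [h1 h2] := base_Int_part y.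
have z0 : (0 <= Int_part y)%Z.
  have : (-1 < Int_part y)%Z by apply: lt_IZR; lra.
  lia.
rewrite INR_IZR_INZ Z2Nat.id //; lra.
Qed.

Lemma sketchable_uniform n k (Seed : finType)
    (sets : Seed -> k.-tuple {set 'I_n}) (g : k.-tuple bool -> R)
    (f : cube n -> R) (delta : R) :
  (0 < #|Seed|)%N ->
  (forall x, exists good : pred Seed,
      (1 - delta) * INR #|Seed| <= INR (count good (enum Seed)) /\
      forall o, good o -> g (sketch (sets o) x) = f x) ->
  sketchable delta f k.
Proof.
move=> Seed0 Hgood; have S0 : 0 < INR #|Seed| by apply: lt_0_INR; apply/ltP.
have p0 : 0 <= 1 / INR #|Seed|.
  by apply: Rmult_le_pos; [lra | apply/Rlt_le/Rinv_0_lt_compat].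
exists [seq (1 / INR #|Seed|, sets o) | o <- enum Seed], g; split.
  split; first by move=> p /List.in_map_iff [o [<- _]].
  by rewrite -map_comp sumR_const -cardT; field; lra.
move=> x; have [good [Hc Hg]] := Hgood x.
have -> : succ_prob [seq (1 / INR #|Seed|, sets o) | o <- enum Seed] g f x =
    sumR [seq (if Req_EM_T (g (sketch (sets o) x)) (f x) then 1 / INR #|Seed|
               else 0) | o <- enum Seed] by rewrite /succ_prob -map_comp.
apply: Rle_trans (sumR_hits (enum Seed) p0 Hg).
apply: (Rmult_le_reg_r (INR #|Seed|)) => //.
by rewrite Rmult_assoc /Rdiv Rmult_1_l Rinv_l; lra.
Qed.

Section Construction.
Variables (n : nat) (F : {set {set 'I_n}}) (w : {set 'I_n} -> R) (theta m : R).
Hypotheses (ltfq : is_theta_m_LTF F w theta m) (m2theta : 2 * m <= theta).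
Variable N : nat.
Hypotheses (thetaN : theta / m <= INR N) (N_gt1 : (1 < N)%N).

Definition W (z : {set 'I_n} -> bool) : R :=
  sumR [seq w A * b2R (z A) | A <- enum F].

Lemma m_gt0 : 0 < m.
Proof. by case: ltfq => _ []. Qed.

Lemma w_ge0 A : A \in F -> 0 <= w A.
Proof. by case: ltfq => H _; apply: H. Qed.

Lemma W_gap z : W z <= theta - m \/ theta + m <= W z.
Proof.
case: ltfq => _ [_ H]; have := H z; rewrite /ltf_form -/(W z).
by rewrite /Rabs; case: Rcase_abs; lra.
Qed.

Lemma W_ext z1 z2 : {in F, z1 =1 z2} -> W z1 = W z2.
Proof.
move=> H; rewrite /W; congr sumR; apply/eq_in_map => A.
by rewrite mem_enum => AF; rewrite H.
Qed.

Lemma N_gt0 : 0 < INR N.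
Proof. by apply: lt_0_INR; apply/ltP; lia. Qed.

Lemma theta_le_Nm : theta <= INR N * m.
Proof.
have m0 := m_gt0; have -> : theta = theta / m * m by field; lra.
by apply: Rmult_le_compat_r; lra.
Qed.

Definition hits (x : cube n) (A : {set 'I_n}) : bool := [exists i in A, x i].

Definition hit_sets (x : cube n) : {set {set 'I_n}} := [set A in F | hits x A].

(* If f(x) = 1, a family of at most N hit sets already has weight at least
   theta + m: in an inclusion-minimal such family every set weighs at least 2m
   (removing it drops the weight below the gap), so it cannot have more than N
   members since N * 2m >= 2 theta. *)
Lemma small_heavy_family x : theta + m <= W (hits x) ->
  exists A0 : {set {set 'I_n}},
    [/\ A0 \subset hit_sets x, theta + m <= W (mem A0) & (#|A0| <= N)%N].
Proof.
move=> heavy_x; have m0 := m_gt0.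
pose heavy (A : {set {set 'I_n}}) :=
  if Rle_dec (theta + m) (W (mem A)) then true else false.
have heavyP (A : {set {set 'I_n}}) : reflect (theta + m <= W (mem A)) (heavy A).
  by rewrite /heavy; case: Rle_dec => h; constructor.
have heavy_hit : heavy (hit_sets x).
  apply/heavyP; rewrite (@W_ext _ (hits x)) // => B BF.
  by rewrite /= inE BF.
have [A /minsetP [/heavyP heavyA minA] Asub] := minset_exists heavy_hit.
exists A; split => //; rewrite leqNgt; apply/negP => N_lt_A.
have AF : A \subset F.
  by apply/subsetP => X /(subsetP Asub); rewrite inE => /andP [].
have light X : X \in A -> W (mem (A :\ X)) <= theta - m.
  move=> XA; case: (W_gap (mem (A :\ X))) => // /heavyP /minA.
  by move/(_ (subD1set A X)) => eqA; move: XA; rewrite -eqA setD11.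
have heavy_elem X : X \in A -> 2 * m <= w X.
  move=> XA; have XF : X \in enum F by rewrite mem_enum (subsetP AF).
  have splitA : W (mem A) = w X + W (mem (A :\ X)).
    rewrite /W (sumR_split_one w (mem A) (enum_uniq F) XF) /= XA /= Rmult_1_r.
    by congr (_ + sumR _); apply: eq_map => a; rewrite /= in_setD1 andbC.
  by have := light X XA; lra.
have /card_gt0P [X0 X0A] : (0 < #|A|)%N by lia.
have := light X0 X0A; apply/Rlt_not_le.
have lowW : INR #|A :\ X0| * (2 * m) <= W (mem (A :\ X0)).
  rewrite -(count_enum_subset (B := F)); last first.
    by apply: subset_trans AF; apply: subD1set.
  rewrite -sum1_count; apply: sumR_lower => X _ XA; rewrite Rmult_1_l.
  by apply: heavy_elem; apply: (subsetP (subD1set A X0)).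
have AX0 : (N <= #|A :\ X0|)%N by rewrite (cardsD1 X0 A) X0A in N_lt_A.
have NA : INR N <= INR #|A :\ X0| by apply: le_INR; apply/leP.
have := Rmult_le_compat_r m _ _ (Rlt_le _ _ m0) NA.
by have := theta_le_Nm; lra.
Qed.

Definition delta : R := m / INR N.
Definition K : nat := (N * N.+1)%N.
Definition level (A : {set 'I_n}) : nat :=
  minn (Z.to_nat (Int_part (w A / delta))) K.

Lemma delta_gt0 : 0 < delta.
Proof. by apply: Rdiv_lt_0_compat; [exact: m_gt0 | exact: N_gt0]. Qed.

Lemma N_delta : INR N * delta = m.
Proof. by have := N_gt0; rewrite /delta => N0; field; lra. Qed.

Lemma scaled_weight_ge0 A : 0 <= w A -> 0 <= w A / delta.
Proof.
by move=> w0; apply: Rmult_le_pos => //; apply/Rlt_le/Rinv_0_lt_compat/delta_gt0.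
Qed.

Lemma level_le_K A : (level A <= K)%N.
Proof. exact: geq_minr. Qed.

Lemma level_lower A : 0 <= w A -> INR (level A) * delta <= w A.
Proof.
move=> w0; have d0 := delta_gt0.
have [fl _] := floor_nat_spec (scaled_weight_ge0 w0).
have -> : w A = w A / delta * delta by field; lra.
apply: Rmult_le_compat_r; first lra.
by apply: Rle_trans fl; apply: le_INR; apply/leP; apply: geq_minl.
Qed.

Lemma level_upper A : 0 <= w A -> (level A < K)%N ->
  w A <= (INR (level A) + 1) * delta.
Proof.
move=> w0 ltK; have d0 := delta_gt0.
have [_ fl] := floor_nat_spec (scaled_weight_ge0 w0).
have -> : level A = Z.to_nat (Int_part (w A / delta)).
  by move: ltK; rewrite /level /minn; case: ifP => // _; rewrite ltnn.
rewrite {1}(_ : w A = w A / delta * delta); last by field; lra.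
by apply: Rmult_le_compat_r; lra.
Qed.

(* The cap K is large enough for a single top-level set to push delta times
   the estimate beyond theta + m. *)
Lemma level_top A : level A = K -> theta + m <= INR (level A) * delta.
Proof.
move=> ->; rewrite /K mult_INR S_INR Rmult_assoc (Rmult_comm _ delta).
rewrite -Rmult_assoc N_delta; have := theta_le_Nm; have := m_gt0; nra.
Qed.

(* The sketch: a random hash h : sets -> [B] and, for every bucket j = (hash
   value, level) and every repetition l < r, a random subset R(j, l); the
   coordinate (j, l) is the parity of x on R(j, l) restricted to the union of
   the sets of F in bucket j. *)
Definition B : nat := (6 * N * N)%N.
Definition r : nat := (trunc_log 2 (6 * N)).+1.
Local Notation Bucket := ('I_B * 'I_K.+1)%type.
Local Notation Coord := (Bucket * 'I_r)%type.
Local Notation Hash := {ffun {set 'I_n} -> 'I_B}.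
Local Notation Seed := (Hash * {ffun Coord -> {set 'I_n}})%type.

Definition bucket (h : Hash) (A : {set 'I_n}) : Bucket := (h A, inord (level A)).

Definition bucket_union (h : Hash) (j : Bucket) : {set 'I_n} :=
  \bigcup_(A in F | bucket h A == j) A.

Definition sketch_sets (o : Seed) : #|{: Coord}|.-tuple {set 'I_n} :=
  [tuple o.2 (enum_val c) :&: bucket_union o.1 (enum_val c).1 | c < #|{: Coord}|].

Definition detected (x : cube n) (o : Seed) (j : Bucket) : bool :=
  [exists l : 'I_r, chi (o.2 (j, l) :&: bucket_union o.1 j) x].

Definition estimate (v : #|{: Coord}|.-tuple bool) : nat :=
  \sum_(j : Bucket) (j.2 : nat) * [exists l : 'I_r, tnth v (enum_rank (j, l))].

Definition decode (v : #|{: Coord}|.-tuple bool) : R :=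
  if Rle_dec (INR (estimate v) * delta) (theta - m) then 0 else 1.

Lemma estimate_sketch x o :
  estimate (sketch (sketch_sets o) x) = \sum_(j : Bucket) (j.2 : nat) * detected x o j.
Proof.
apply: eq_bigr => j _; congr (_ * nat_of_bool _)%N; apply: eq_existsb => l.
by rewrite /sketch tnth_map tnth_mktuple enum_rankK.
Qed.

Lemma bucket_level h A : (bucket h A).2 = level A :> nat.
Proof. by rewrite /= inordK // ltnS level_le_K. Qed.

(* A detected bucket contains a hit set, so the estimate never exceeds the
   total level of the hit sets. *)
Lemma estimate_le_hit_levels x o :
  (\sum_(j : Bucket) (j.2 : nat) * detected x o j <=
   \sum_(A in F | hits x A) level A)%N.
Proof.
rewrite (partition_big (bucket o.1) xpredT) //; apply: leq_sum => j _.
case dj: (detected x o j); rewrite ?muln0 // muln1.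
move: dj => /existsP [l] /odd_gt0; rewrite card_gt0 => /set0Pn [i].
rewrite !inE => /andP [/andP [_ /bigcupP [A /andP [AF /eqP bA] iA]] xi].
rewrite (bigD1 A) /=; first by rewrite -bA bucket_level leq_addr.
by rewrite AF bA eqxx andbT; apply/existsP; exists i; rewrite iA.
Qed.

Lemma decode_light x o : W (hits x) <= theta - m -> decode (sketch (sketch_sets o) x) = 0.
Proof.
move=> light; rewrite /decode estimate_sketch; case: Rle_dec => // [[]].
apply: Rle_trans light; have d0 := delta_gt0.
apply: Rle_trans (_ : INR (\sum_(A <- enum F | hits x A) level A) * delta <= _).
  apply: Rmult_le_compat_r; first lra.
  by apply: le_INR; apply/leP; rewrite big_enum_cond; apply: estimate_le_hit_levels.
by apply: sumR_lower => A; rewrite mem_enum => AF _; apply: level_lower; apply: w_ge0.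
Qed.

Lemma estimate_ge_levels x (o : Seed) (A0 : {set {set 'I_n}}) :
  {in A0 &, injective o.1} -> (forall A, A \in A0 -> detected x o (bucket o.1 A)) ->
  (\sum_(A in A0) level A <= \sum_(j : Bucket) (j.2 : nat) * detected x o j)%N.
Proof.
move=> inj det.
have inj_bucket : {in A0 &, injective (bucket o.1)}.
  by move=> A1 A2 h1 h2 [/(inj _ _ h1 h2)].
rewrite -(eq_bigr _ (fun A _ => bucket_level o.1 A)).
rewrite -(big_imset (fun j : Bucket => (j.2 : nat)) inj_bucket) /=.
rewrite [X in (_ <= X)%N](bigID (mem (bucket o.1 @: A0))) /=.
apply: leq_trans (leq_addr _ _); rewrite big_mkcond [X in (_ <= X)%N]big_mkcond.
apply: leq_sum => j _; case: imsetP => // [[A AA0 ->]].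
by rewrite det // muln1.
Qed.

(* Completeness: on the good event for a heavy family A0 of at most N hit
   sets, the decoder answers 1.  Either some set of A0 is at the top level, or
   all levels are exact up to delta and the rounding loses at most N delta = m. *)
Lemma decode_heavy x (o : Seed) (A0 : {set {set 'I_n}}) :
  A0 \subset hit_sets x -> theta + m <= W (mem A0) -> (#|A0| <= N)%N ->
  {in A0 &, injective o.1} -> (forall A, A \in A0 -> detected x o (bucket o.1 A)) ->
  decode (sketch (sketch_sets o) x) = 1.
Proof.
move=> sub heavyA0 smallA0 inj det.
have A0F : A0 \subset F.
  by apply/subsetP => A /(subsetP sub); rewrite inE => /andP [].
have d0 := delta_gt0; have m0 := m_gt0.
have est : INR (\sum_(A in A0) level A) * delta <=
           INR (estimate (sketch (sketch_sets o) x)) * delta.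
  apply: Rmult_le_compat_r; first lra.
  by apply: le_INR; apply/leP; rewrite estimate_sketch; apply: estimate_ge_levels.
rewrite /decode; case: Rle_dec => // low; exfalso.
case: (boolP [exists A in A0, level A == K]) => [|all_low].
  move=> /existsP [A /andP [AA0 /eqP topA]].
  have := level_top topA.
  have : (level A <= \sum_(A in A0) level A)%N by rewrite (bigD1 A) //= leq_addr.
  move/leP/le_INR/(Rmult_le_compat_r _ _ _ (Rlt_le _ _ d0)); lra.
have upper X : X \in enum F -> X \in A0 -> w X <= (INR (level X) + 1) * delta.
  rewrite mem_enum => XF XA0; apply: level_upper; first exact: w_ge0.
  rewrite ltn_neqAle level_le_K andbT.
  by apply: contra all_low => topX; apply/existsP; exists X; rewrite XA0.
have upW : W (mem A0) <= INR (\sum_(X in A0) level X) * delta + INR #|A0| * delta.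
  by rewrite -(count_enum_subset A0F) -(sum_enum_subset _ A0F); apply: sumR_upper.
have : INR #|A0| * delta <= m.
  rewrite -N_delta; apply: Rmult_le_compat_r; first lra.
  by apply: le_INR; apply/leP.
lra.
Qed.

Definition good x (A0 : {set {set 'I_n}}) (o : Seed) : bool :=
  [forall A1 in A0, forall A2 in A0, (o.1 A1 == o.1 A2) ==> (A1 == A2)] &&
  [forall A in A0, detected x o (bucket o.1 A)].

Lemma card_seed_collision (A1 A2 : {set 'I_n}) : A1 != A2 ->
  (B * #|[set o : Seed | o.1 A1 == o.1 A2]| = #|{: Seed}|)%N.
Proof.
move=> A12.
have -> : [set o : Seed | o.1 A1 == o.1 A2] =
          setX [set h : Hash | h A1 == h A2] setT.
  by apply/setP => o; rewrite !inE andbT.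
rewrite cardsX cardsT mulnA card_prod.
by have := card_ffun_collision 'I_B A12; rewrite card_ord => ->.
Qed.

Lemma card_seed_undetected x (A : {set 'I_n}) : A \in hit_sets x ->
  (2 ^ r * #|[set o : Seed | ~~ detected x o (bucket o.1 A)]| = #|{: Seed}|)%N.
Proof.
rewrite inE => /andP [AF /existsP [i /andP [iA xi]]].
rewrite (card_pairs (fun h R => ~~ detected x (h, R) (bucket h A))).
rewrite big_distrr /= card_prod -sum_nat_const; apply: eq_bigr => h _.
have iE : i \in bucket_union h (bucket h A).
  by apply/bigcupP; exists A => //; rewrite AF eqxx.
exact: (card_all_even_parities r (bucket h A) iE xi).
Qed.

Lemma not_good_subset x (A0 : {set {set 'I_n}}) :
  [set o : Seed | ~~ good x A0 o] \subset
  (\bigcup_(p | [&& p.1 \in A0, p.2 \in A0 & p.1 != p.2])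
      [set o : Seed | o.1 p.1 == o.1 p.2]) :|:
  \bigcup_(A in A0) [set o : Seed | ~~ detected x o (bucket o.1 A)].
Proof.
apply/subsetP => o; rewrite inE negb_and => /orP [].
  rewrite negb_forall => /existsP [A1]; rewrite negb_imply => /andP [A1A0].
  rewrite negb_forall => /existsP [A2]; rewrite !negb_imply => /and3P [A2A0 e ne].
  by apply/setUP; left; apply/bigcupP; exists (A1, A2); rewrite /= ?A1A0 ?A2A0 ?inE.
rewrite negb_forall => /existsP [A]; rewrite negb_imply => /andP [AA0 nd].
by apply/setUP; right; apply/bigcupP; exists A; rewrite ?inE.
Qed.

(* Union bound: for at most N hit sets, the good event fails with probability
   at most N^2/B + N 2^-r <= 1/6 + 1/6. *)
Lemma card_not_good x (A0 : {set {set 'I_n}}) :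
  A0 \subset hit_sets x -> (#|A0| <= N)%N ->
  (3 * #|[set o : Seed | ~~ good x A0 o]| <= #|{: Seed}|)%N.
Proof.
move=> sub smallA0.
set D := fun p : {set 'I_n} * {set 'I_n} => [&& p.1 \in A0, p.2 \in A0 & p.1 != p.2].
set S1 := \sum_(p | D p) #|[set o : Seed | o.1 p.1 == o.1 p.2]|.
set S2 := \sum_(A in A0) #|[set o : Seed | ~~ detected x o (bucket o.1 A)]|.
have bad : (#|[set o : Seed | ~~ good x A0 o]| <= S1 + S2)%N.
  apply: leq_trans (subset_leq_card (not_good_subset x A0)) _.
  apply: leq_trans (leq_card_setU _ _) _.
  by apply: leq_add; apply: card_bigcup_le.
have coll : (B * S1 <= N * N * #|{: Seed}|)%N.
  rewrite /S1 big_distrr /= (eq_bigr (fun _ => #|{: Seed}|)); last first.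
    by move=> [A1 A2] /and3P [_ _ ne]; apply: card_seed_collision.
  rewrite sum_nat_cond_const leq_mul2r; apply/orP; right.
  apply: leq_trans (_ : #|setX A0 A0| <= _)%N; last by rewrite cardsX leq_mul.
  apply: subset_leq_card; apply/subsetP => [[A1 A2]]; rewrite !inE /D /=.
  by case/and3P => -> ->.
have undet : (2 ^ r * S2 <= N * #|{: Seed}|)%N.
  rewrite /S2 big_distrr /= (eq_bigr (fun _ => #|{: Seed}|)); last first.
    by move=> A AA0; apply: card_seed_undetected; apply: (subsetP sub).
  by rewrite sum_nat_const leq_mul2r smallA0 orbT.
have r_large : (6 * N < 2 ^ r)%N by apply: trunc_log_ltn.
have N0 : (0 < N)%N by lia.
have : (6 * S1 <= #|{: Seed}|)%N.
  move: coll; rewrite /B (_ : 6 * N * N * S1 = N * N * (6 * S1))%N; last by lia.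
  by rewrite leq_pmul2l // muln_gt0 N0.
have : (N * (6 * S2) <= N * #|{: Seed}|)%N.
  apply: leq_trans undet; rewrite mulnA leq_mul2r; apply/orP; right.
  by rewrite mulnC ltnW.
rewrite leq_pmul2l //; lia.
Qed.

Lemma sketch_correct : sketchable (1 / 3) (f_or F w theta) #|{: Coord}|.
Proof.
have B0 : (0 < B)%N by rewrite /B; lia.
apply: (sketchable_uniform (sets := sketch_sets) (g := decode)).
  by apply/card_gt0P; exists ([ffun=> Ordinal B0], [ffun=> set0]).
have cardS : size (enum {: Seed}) = #|{: Seed}| by rewrite cardT.
move=> x; rewrite cardT cardS.
have fx : f_or F w theta x = sgn (- theta + W (hits x)) by [].
have m0 := m_gt0; have S0 : 0 <= INR #|{: Seed}| by apply: pos_INR.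
case: (W_gap (hits x)) => hW.
  exists predT; split; first by rewrite count_predT cardS; lra.
  by move=> o _; rewrite decode_light // fx /sgn; case: Rle_dec => // h; lra.
have [A0 [sub heavyA0 smallA0]] := small_heavy_family hW.
exists (good x A0); split; last first.
  move=> o /andP [/forallP inj /forallP det]; rewrite fx /sgn.
  case: Rle_dec => [_ /=|h]; last by exfalso; lra.
  apply: (decode_heavy sub heavyA0 smallA0) => [A1 A2 A1A0 A2A0 eq12|A AA0].
    apply/eqP; move: (inj A1); rewrite A1A0 => /forallP /(_ A2).
    by rewrite A2A0 eq12 eqxx.
  by move: (det A); rewrite AA0.
have := count_predC (good x A0) (enum {: Seed}).
rewrite cardS [count (predC _) _]count_enum_card => split.
have /leP/le_INR := card_not_good sub smallA0.
rewrite -split !mult_INR !plus_INR /=; lra.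
Qed.

End Construction.

Lemma Rlin_le n (delta : R) (f : cube n -> R) k :
  sketchable delta f k -> (Rlin delta f <= k)%N.
Proof.
move=> sk; rewrite /Rlin; case: excluded_middle_informative => [ex|[]]; last by exists k.
case: ex_minnP => k' _; apply; rewrite /sketchable_b.
by case: excluded_middle_informative.
Qed.

Lemma INR_expn a b : INR (a ^ b) = INR a ^ b.
Proof. by elim: b => [|b IH] //; rewrite expnS mult_INR IH. Qed.

Lemma ln_le x y : 0 < x -> x <= y -> ln x <= ln y.
Proof. by move=> x0 [xy|<-]; [apply/Rlt_le/ln_increasing | apply: Rle_refl]. Qed.

Lemma repetitions_bound (N : nat) (t : R) : (0 < N)%N -> 2 <= t -> INR N <= t + 1 ->
  INR (trunc_log 2 (6 * N)).+1 <= 24 * ln t ^ 2.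
Proof.
move=> N0 t2 Nt; set e := trunc_log 2 (6 * N).
have ln2 := ln_lt_2.
have ln2t : ln 2 <= ln t by apply: ln_le; lra.
have pow_e : 2 ^ e <= 9 * t.
  have : (2 ^ e <= 6 * N)%N by apply: trunc_logP; lia.
  move/leP/le_INR; rewrite INR_expn mult_INR.
  have -> : INR 2 = 2 by rewrite /=; lra.
  have -> : INR 6 = 6 by rewrite /=; lra.
  lra.
have e_ln2 : INR e * ln 2 <= ln 9 + ln t.
  rewrite -ln_pow; last lra.
  rewrite -ln_mult; try lra.
  by apply: ln_le => //; apply: pow_lt; lra.
have ln9 : ln 9 <= 4 * ln 2.
  have -> : 4 * ln 2 = ln (2 ^ 4) by rewrite ln_pow; [rewrite /=; lra | lra].
  by apply: ln_le; rewrite /=; lra.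
have : INR e <= 4 + 2 * ln t.
  apply: (Rmult_le_reg_r (ln 2)); nra.
rewrite S_INR; nra.
Qed.

Lemma sketch_size_bound (N : nat) (t : R) : 2 <= t -> t <= INR N <= t + 1 ->
  INR (B N * (K N).+1 * r N) <= 1296 * t ^ 4 * ln t ^ 2.
Proof.
move=> t2 [tN Nt].
have N0 : (0 < N)%N by apply/ltP/INR_lt; rewrite /=; lra.
have hr := repetitions_bound N0 t2 Nt.
rewrite /B /K !mult_INR (S_INR (N * N.+1)) mult_INR (S_INR N).
rewrite (_ : INR 6 = 6); last by rewrite /=; lra.
set L := ln t in hr |- *; set R_ := INR (r N) in hr |- *; set X := INR N in tN Nt |- *.
have r0 : 0 <= R_ by apply: pos_INR.
have poly : 6 * X * X * (X * (X + 1) + 1) <= 54 * t ^ 4.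
  have h1 : X * X <= 2.25 * t ^ 2 by nra.
  have h2 : X * (X + 1) + 1 <= 4 * t ^ 2 by nra.
  have p1 : 0 <= X * X by nra.
  have p2 : 0 <= X * (X + 1) + 1 by nra.
  have := Rmult_le_compat _ _ _ _ p1 p2 h1 h2; nra.
have p : 0 <= 6 * X * X * (X * (X + 1) + 1) by nra.
have := Rmult_le_compat _ _ _ _ p r0 poly hr; nra.
Qed.

Theorem mainTheorem10 :
  exists C : R,
  forall (n : nat) (F : {set {set 'I_n}}) (w : {set 'I_n} -> R) (theta m : R),
    is_theta_m_LTF F w theta m ->
    2 * m <= theta -> 0 < m ->
    INR (Rlin (1 / 3) (f_or F w theta)) <=
      C * (theta / m) ^ 4 * (ln (theta / m)) ^ 2.
Proof.
exists 1296 => n F w theta m ltfq m2theta m0.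
set t := theta / m.
have t2 : 2 <= t.
  by apply: (Rmult_le_reg_r m) => //; rewrite /t /Rdiv Rmult_assoc Rinv_l; lra.
pose N := (Z.to_nat (Int_part t)).+1.
have [tN Nt] : t <= INR N <= t + 1.
  by have := floor_nat_spec (ltac:(lra) : 0 <= t); rewrite /N S_INR; lra.
have N_gt1 : (1 < N)%N by apply/ltP/INR_lt; rewrite [INR 1]/=; lra.
have := Rlin_le (sketch_correct ltfq m2theta tN N_gt1).
rewrite !card_prod !card_ord => /leP /le_INR Rlin_size.
exact: Rle_trans Rlin_size (sketch_size_bound t2 (conj tN Nt)).
Qed.
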